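(* Let $f\colon\mathbb{R}^n\to\mathbb{R}$ be convex and differentiable with $\|\nabla f(x)-\nabla f(y)\|\le L\|x-y\|$ for all $x,y\in\mathbb{R}^n$ (Euclidean norm, $L>0$), and assume $f$ has a minimizer $x_\star$; write $f_\star=f(x_\star)$. Let $\{\theta_k\}_{k=0}^\infty$ be a positive sequence with $\theta_0=1$ and $0\le\theta_{k+1}^2-\theta_{k+1}\le\theta_k^2$ for $k=0,1,\dots$. Given $x_0\in\mathbb{R}^n$, let $y_0=x_0$ and for $k=0,1,\dots$ \[ y_{k+1}=x_k-\tfrac1L\nabla f(x_k),\qquad x_{k+1}=y_{k+1}+\frac{\theta_k-1}{\theta_{k+1}}(y_{k+1}-y_k)+\frac{\theta_k}{\theta_{k+1}}(y_{k+1}-x_k). \] Then for $k=1,2,\dots$, \[ f(y_k)-f_\star\le\frac{L\|x_0-x_\star\|^2}{4\theta_{k-1}^2}. \]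
   Context: This iteration is the optimized gradient method (OGM). $\|\cdot\|$ denotes the Euclidean norm. *)

(* R^n is represented by row vectors 'rV[R]_n. *)
From HB Require Import structures.
From mathcomp Require Import all_boot all_order all_algebra.
From mathcomp Require Import all_classical all_reals all_analysis.
Set Implicit Arguments. Unset Strict Implicit. Unset Printing Implicit Defensive.
Import Order.TTheory GRing.Theory Num.Theory.
Import numFieldNormedType.Exports.
Local Open Scope ring_scope.

Definition dotv (R : realType) (n : nat) (u v : 'rV[R]_n) : R :=
  \sum_(i < n) u 0 i * v 0 i.

(* Euclidean norm (the library's norm on matrices is the max-norm) *)
Definition enorm (R : realType) (n : nat) (u : 'rV[R]_n) : R :=
  Num.sqrt (dotv u u).

Definition convex_fun (R : realType) (n : nat) (f : 'rV[R]_n -> R) : Prop :=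
  forall (x y : 'rV[R]_n) (t : R), 0 <= t -> t <= 1 ->
    f (t *: x + (1 - t) *: y) <= t * f x + (1 - t) * f y.

Definition is_gradient (R : realType) (n : nat) (f : 'rV[R]_n -> R)
    (g : 'rV[R]_n -> 'rV[R]_n) : Prop :=
  forall x : 'rV[R]_n, differentiable f x /\ forall v, 'd f x v = dotv (g x) v.

(* Write g_k for the gradient at x_k,
   h_k = f(x_k) - f_* - |g_k|^2/(2L), which bounds f(y_{k+1}) - f_* by the
   descent lemma, and z_k = theta_k x_k - (theta_k - 1) y_k, which satisfies
   z_{k+1} = z_k - (2 theta_k / L) g_k.  The inequality
     f(a) - f(b) <= <g(a), a - b> - |g(a) - g(b)|^2/(2L)
   of convex L-smooth functions, applied to (x_{k+1}, x_k) with weight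
   theta_{k+1}^2 - theta_{k+1} and to (x_{k+1}, x_* ) with weight theta_{k+1},
   together with theta_{k+1}^2 - theta_{k+1} <= theta_k^2, shows that
   V_k = 2 theta_k^2 h_k + (L/2) |z_{k+1} - x_*|^2 does not increase; and
   V_0 <= (L/2) |x_0 - x_*|^2.  Hence
   f(y_{k+1}) - f_* <= h_k <= V_0 / (2 theta_k^2).
   The descent lemma itself is proved without integration, by summing the
   gradient inequality along a grid of mesh 1/M on [a, b] and letting M grow. *)

From HB Require Import structures.
From mathcomp Require Import all_boot all_order all_algebra.
From mathcomp Require Import all_classical all_reals all_analysis.
From mathcomp Require Import ring lra.
Import Order.TTheory GRing.Theory Num.Theory.
Import numFieldNormedType.Exports.
Local Open Scope classical_set_scope.
Local Open Scope ring_scope.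

Lemma ler_of_le_addr_divS (R : archiRealFieldType) (a b c : R) : 0 <= c ->
  (forall m : nat, a <= b + c / m.+1%:R) -> a <= b.
Proof.
move=> c_ge0 le_ab; apply/ler_addgt0Pr => e e_gt0.
have ce_ge0 : 0 <= c / e by rewrite divr_ge0 // ltW.
apply: (le_trans (le_ab (Num.bound (c / e)))); rewrite lerD2l.
rewrite ler_pdivrMr ?ltr0Sn // mulrC -ler_pdivrMr //.
by apply: (le_trans (ltW (archi_boundP ce_ge0))); rewrite ler_nat.
Qed.

Section EuclideanInnerProduct.
Context {R : realType} {n : nat}.
Implicit Types (u v w : 'rV[R]_n) (c : R).

Lemma dotvC u v : dotv u v = dotv v u.
Proof. by apply: eq_bigr => i _; rewrite mulrC. Qed.

Lemma dotvDl u v w : dotv (u + v) w = dotv u w + dotv v w.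
Proof. by rewrite /dotv -big_split; apply: eq_bigr => i _; rewrite mxE mulrDl. Qed.

Lemma dotvNl u v : dotv (- u) v = - dotv u v.
Proof. by rewrite /dotv -sumrN; apply: eq_bigr => i _; rewrite mxE mulNr. Qed.

Lemma dotvZl c u v : dotv (c *: u) v = c * dotv u v.
Proof. by rewrite /dotv mulr_sumr; apply: eq_bigr => i _; rewrite mxE mulrA. Qed.

Lemma dotvDr u v w : dotv u (v + w) = dotv u v + dotv u w.
Proof. by rewrite dotvC dotvDl !(dotvC _ u). Qed.

Lemma dotvNr u v : dotv u (- v) = - dotv u v.
Proof. by rewrite dotvC dotvNl dotvC. Qed.

Lemma dotvZr c u v : dotv u (c *: v) = c * dotv u v.
Proof. by rewrite dotvC dotvZl dotvC. Qed.

Definition dotvE := (dotvDl, dotvDr, dotvNl, dotvNr, dotvZl, dotvZr).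

Lemma dotvv_ge0 u : 0 <= dotv u u.
Proof. by apply: sumr_ge0 => i _; rewrite -expr2 sqr_ge0. Qed.

Lemma dotvv_eq0 u : (dotv u u == 0) = (u == 0).
Proof.
apply/idP/eqP => [|->]; last by rewrite /dotv big1 // => i _; rewrite mxE mul0r.
move=> /eqP /psumr_eq0P u0; apply/rowP => i; rewrite mxE.
by apply/eqP; rewrite -sqrf_eq0 expr2 u0 // => j _; rewrite -expr2 sqr_ge0.
Qed.

Lemma enorm_sqr u : enorm u ^+ 2 = dotv u u.
Proof. by rewrite sqr_sqrtr // dotvv_ge0. Qed.

Lemma dotv_le_of_enorm_le {L : R} {u v : 'rV[R]_n} : 0 < L ->
  enorm u <= L * enorm v -> dotv u v <= L * dotv v v.
Proof.
move=> L_gt0 le_uv.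
have uu_le : dotv u u <= L ^+ 2 * dotv v v.
  rewrite -!enorm_sqr; have := sqrtr_ge0 (dotv u u); rewrite -/(enorm u); nra.
(* 0 <= |u - L v|^2 = |u|^2 - 2 L <u, v> + L^2 |v|^2 <= 2 L^2 |v|^2 - 2 L <u, v> *)
have := dotvv_ge0 (u - L *: v); rewrite !dotvE (dotvC v u) => sq_ge0.
nra.
Qed.

End EuclideanInnerProduct.

Section SmoothConvexFunction.
Context {R : realType} {n : nat} {f : 'rV[R]_n -> R} {g : 'rV[R]_n -> 'rV[R]_n} {L : R}.
Hypothesis f_convex : convex_fun f.
Hypothesis f_grad : is_gradient f g.
Hypothesis L_gt0 : 0 < L.
Hypothesis g_lip : forall u v, enorm (g u - g v) <= L * enorm (u - v).
Implicit Types (a b u v : 'rV[R]_n).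

Local Lemma L_neq0 : L != 0. Proof. exact: lt0r_neq0. Qed.

(* By convexity the right difference quotients of f at a along b - a are at
   most f b - f a; their limit is the directional derivative <g a, b - a>. *)
Lemma convex_gradient_le a b : f a + dotv (g a) (b - a) <= f b.
Proof.
set v := b - a; have [f_diff df] := f_grad a.
have f_der : derivable f a v by exact: diff_derivable.
set q := (fun h : R => h^-1 *: ((f \o shift a) (h *: v) - f a)) in f_der.
have q_right : q @ 0^'+ --> lim (q @ 0^').
  move=> A /f_der /nbhs_ballP [_ /posnumP[e] qeA].
  by exists e%:num => //= t t_near /gt_eqF/negbT/qeA; exact.
have : lim (q @ 0^') <= f b - f a.
  apply: (cvgr_to_le q_right); near=> t.
  have t_gt0 : 0 < t by near: t; exact: nbhs_right_gt.
  have t_lt1 : t < 1 by near: t; exact: nbhs_right_lt.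
  rewrite /q /= ler_pdivrMl // addrC.
  have -> : (t *: v + a) = t *: b + (1 - t) *: a.
    by apply/rowP => i; rewrite /v !mxE; ring.
  by have := f_convex b a t (ltW t_gt0) (ltW t_lt1); lra.
by rewrite -/(derive f a v) deriveE // df; lra.
Unshelve. all: by end_near. Qed.

Lemma lipschitz_gradient_dir u v c : 0 < c ->
  dotv (g (u + c *: v)) v <= dotv (g u) v + L * c * dotv v v.
Proof.
move=> c_gt0; have := dotv_le_of_enorm_le L_gt0 (g_lip (u + c *: v) u).
by rewrite addrAC subrr add0r !dotvE; nra.
Qed.

(* Each grid step is bounded by the gradient inequality at its endpoint,
   then by the Lipschitz bound on the gradient. *)
Lemma descent_on_grid a v (M : R) (j : nat) : 0 < M ->
  f (a + (j%:R / M) *: v) - f a <=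
    j%:R / M * dotv (g a) v + L * dotv v v * (j%:R * (j%:R + 1)) / (2 * M ^+ 2).
Proof.
move=> M_gt0; have M_neq0 := lt0r_neq0 M_gt0.
elim: j => [|j IHj]; first by rewrite !mul0r scale0r addr0 subrr mulr0 mul0r.
have grad := convex_gradient_le (a + (j.+1%:R / M) *: v) (a + (j%:R / M) *: v).
have step : a + (j%:R / M) *: v - (a + (j.+1%:R / M) *: v) = - (M^-1 *: v).
  by apply/rowP => i; rewrite !mxE -natr1; field.
rewrite step dotvNr dotvZr in grad.
have lip := lipschitz_gradient_dir a v _ (divr_gt0 (ltr0Sn _ j) M_gt0).
have Minv_ge0 : 0 <= M^-1 by rewrite invr_ge0 ltW.
have {}lip := ler_wpM2l Minv_ge0 lip.
have -> : j.+1%:R / M * dotv (g a) v + L * dotv v v * (j.+1%:R * (j.+1%:R + 1))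
      / (2 * M ^+ 2) = j%:R / M * dotv (g a) v + L * dotv v v * (j%:R * (j%:R + 1))
      / (2 * M ^+ 2) + M^-1 * (dotv (g a) v + L * (j.+1%:R / M) * dotv v v).
  by rewrite -natr1; field.
lra.
Qed.

Lemma descent_lemma a b :
  f b <= f a + dotv (g a) (b - a) + L / 2 * dotv (b - a) (b - a).
Proof.
set v := b - a; suff : f b - f a - dotv (g a) v <= L / 2 * dotv v v by lra.
apply: (@ler_of_le_addr_divS _ _ _ (L / 2 * dotv v v)).
  by rewrite mulr_ge0 ?dotvv_ge0 // divr_ge0 // ltW.
move=> m; set M : R := m.+1%:R.
have M_gt0 : 0 < M by rewrite ltr0Sn.
have := descent_on_grid a v M m.+1 M_gt0; rewrite -/M divff ?lt0r_neq0 // scale1r mul1r.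
have -> : a + v = b by rewrite addrC subrK.
have -> : L * dotv v v * (M * (M + 1)) / (2 * M ^+ 2) = L / 2 * dotv v v + L / 2 * dotv v v / M.
  by field; rewrite lt0r_neq0.
by clearbody M; lra.
Qed.

Lemma gradient_step_le a :
  f (a - L^-1 *: g a) <= f a - dotv (g a) (g a) / L / 2.
Proof.
have := descent_lemma a (a - L^-1 *: g a).
rewrite (addrAC a) subrr add0r !dotvE.
suff -> : f a + - (L^-1 * dotv (g a) (g a)) + L / 2 * - - (L^-1 * (L^-1 * dotv (g a) (g a)))
          = f a - dotv (g a) (g a) / L / 2 by [].
by field; exact: L_neq0.
Qed.

(* Compare [f a] and [f b] through the point [w] one gradient step of size
   [1/L] away from [b] in the direction of [g a - g b]. *)
Lemma smooth_convex_interpolation a b :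
  f a - f b <= dotv (g a) (a - b) - dotv (g a - g b) (g a - g b) / L / 2.
Proof.
set d := g b - g a; set w := b - L^-1 *: d.
have lower := convex_gradient_le a w.
have upper := descent_lemma b w.
have wa : w - a = - (a - b) - L^-1 *: d by rewrite /w opprB addrAC.
have wb : w - b = - (L^-1 *: d) by rewrite /w addrAC subrr add0r.
have ab : g a - g b = - d by rewrite opprB.
have dd : dotv d d = dotv (g b) d - dotv (g a) d by rewrite /d dotvDl dotvNl.
clearbody w d; rewrite ab !dotvE opprK.
rewrite wa !dotvE in lower; rewrite wb !dotvE opprK in upper.
have sq : L / 2 * (L^-1 * (L^-1 * dotv d d)) = dotv d d / L / 2.
  by field; exact: L_neq0.
rewrite sq dd in upper; rewrite dd; lra.
Qed.

Lemma gradient_eq0_at_minimizer xs : (forall u, f xs <= f u) -> g xs = 0.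
Proof.
move=> xs_min; apply/eqP; rewrite -dotvv_eq0 eq_le dotvv_ge0 andbT.
have := gradient_step_le xs; have := xs_min (xs - L^-1 *: g xs).
move: (dotv _ _) => G le_min le_step.
have : G / L / 2 <= 0 by lra.
by rewrite !pmulr_lle0 ?invr_gt0.
Qed.
End SmoothConvexFunction.

Section OptimizedGradientMethod.
Context {R : realType} {n : nat} {f : 'rV[R]_n -> R} {g : 'rV[R]_n -> 'rV[R]_n}.
Context {L : R} {xs : 'rV[R]_n} {theta : nat -> R} {x y : nat -> 'rV[R]_n}.
Hypothesis f_convex : convex_fun f.
Hypothesis f_grad : is_gradient f g.
Hypothesis L_gt0 : 0 < L.
Hypothesis g_lip : forall u v, enorm (g u - g v) <= L * enorm (u - v).
Hypothesis xs_min : forall u, f xs <= f u.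
Hypothesis theta_gt0 : forall k, 0 < theta k.
Hypothesis theta0 : theta 0%N = 1.
Hypothesis theta_succ : forall k, 0 <= theta k.+1 ^+ 2 - theta k.+1 /\
                                  theta k.+1 ^+ 2 - theta k.+1 <= theta k ^+ 2.
Hypothesis y_succ : forall k, y k.+1 = x k - L^-1 *: g (x k).
Hypothesis x_succ : forall k, x k.+1 = y k.+1 + ((theta k - 1) / theta k.+1) *: (y k.+1 - y k)
                                      + (theta k / theta k.+1) *: (y k.+1 - x k).

Definition ogm_gap k := f (x k) - f xs - dotv (g (x k)) (g (x k)) / L / 2.

Definition ogm_z k := theta k *: x k - (theta k - 1) *: y k.

Definition ogm_potential k :=
  2 * theta k ^+ 2 * ogm_gap k + L / 2 * dotv (ogm_z k.+1 - xs) (ogm_z k.+1 - xs).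

Local Notation init_dist := (dotv (x 0%N - xs) (x 0%N - xs)).

Lemma ogm_value_le_gap k : f (y k.+1) - f xs <= ogm_gap k.
Proof. by rewrite y_succ /ogm_gap; have := gradient_step_le f_convex f_grad L_gt0 g_lip (x k); lra. Qed.

Lemma ogm_gap_ge0 k : 0 <= ogm_gap k.
Proof. by have := ogm_value_le_gap k; have := xs_min (y k.+1); lra. Qed.

Lemma ogm_gap_le k :
  ogm_gap k <= dotv (g (x k)) (x k - xs) - dotv (g (x k)) (g (x k)) / L.
Proof.
have := smooth_convex_interpolation f_convex f_grad L_gt0 g_lip (x k) xs.
by rewrite (gradient_eq0_at_minimizer f_convex f_grad L_gt0 g_lip xs xs_min) subr0 /ogm_gap; lra.
Qed.

Lemma ogm_gap_succ k : ogm_gap k.+1 - ogm_gap k <=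
  dotv (g (x k.+1)) (x k.+1 - y k.+1) - dotv (g (x k.+1)) (g (x k.+1)) / L.
Proof.
have := smooth_convex_interpolation f_convex f_grad L_gt0 g_lip (x k.+1) (x k).
by rewrite /ogm_gap y_succ !dotvE (dotvC (g (x k))); lra.
Qed.

Lemma ogm_z0 : ogm_z 0%N = x 0%N.
Proof. by rewrite /ogm_z theta0 subrr scale0r subr0 scale1r. Qed.

Lemma ogm_z_succ k : ogm_z k.+1 = ogm_z k - (2 * theta k / L) *: g (x k).
Proof.
have theta_neq0 := lt0r_neq0 (theta_gt0 k.+1); have L_neq0 := lt0r_neq0 L_gt0.
by apply/rowP => i; rewrite /ogm_z x_succ !y_succ !mxE; field; rewrite L_neq0 theta_neq0.
Qed.

Lemma ogm_dist_succ k :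
  L / 2 * dotv (ogm_z k.+1 - xs) (ogm_z k.+1 - xs) =
  L / 2 * dotv (ogm_z k - xs) (ogm_z k - xs)
  - 2 * theta k * dotv (g (x k)) (ogm_z k - xs)
  + 2 * theta k ^+ 2 * (dotv (g (x k)) (g (x k)) / L).
Proof.
rewrite ogm_z_succ addrAC; move: (ogm_z k - xs) => d.
by rewrite !dotvE (dotvC d); field; exact: lt0r_neq0.
Qed.

Lemma ogm_gradient_dot_z k : dotv (g (x k)) (ogm_z k - xs) =
  (theta k - 1) * dotv (g (x k)) (x k - y k) + dotv (g (x k)) (x k - xs).
Proof. by rewrite /ogm_z !dotvE; ring. Qed.

Lemma ogm_potential0 : ogm_potential 0%N <= L / 2 * init_dist.
Proof.
rewrite /ogm_potential ogm_dist_succ ogm_z0 theta0.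
by have := ogm_gap_le 0; lra.
Qed.

Lemma ogm_potential_succ k : ogm_potential k.+1 <= ogm_potential k.
Proof.
rewrite /ogm_potential ogm_dist_succ ogm_gradient_dot_z.
have [weight_ge0 weight_le] := theta_succ k.
have gap_succ := ler_wpM2l weight_ge0 (ogm_gap_succ k).
have gap_le := ler_wpM2l (ltW (theta_gt0 k.+1)) (ogm_gap_le k.+1).
have slack : 0 <= (theta k ^+ 2 - (theta k.+1 ^+ 2 - theta k.+1)) * ogm_gap k.
  by rewrite mulr_ge0 ?ogm_gap_ge0 // subr_ge0.
lra.
Qed.

Lemma ogm_potential_le k : ogm_potential k <= L / 2 * init_dist.
Proof.
elim: k => [|k IHk]; first exact: ogm_potential0.
exact: le_trans (ogm_potential_succ k) IHk.
Qed.

Lemma ogm_rate k :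
  f (y k.+1) - f xs <= L * enorm (x 0%N - xs) ^+ 2 / (4 * theta k ^+ 2).
Proof.
have theta2_gt0 : 0 < theta k ^+ 2 by rewrite exprn_gt0.
rewrite enorm_sqr ler_pdivlMr ?mulr_gt0 //.
have := ogm_potential_le k; rewrite /ogm_potential.
have := mulr_ge0 (divr_ge0 (ltW L_gt0) (ler0n _ 2)) (dotvv_ge0 (ogm_z k.+1 - xs)).
have := ler_wpM2r (ltW theta2_gt0) (ogm_value_le_gap k).
lra.
Qed.

End OptimizedGradientMethod.

Theorem theorem1 (R : realType) (n : nat) (f : 'rV[R]_n -> R)
  (g : 'rV[R]_n -> 'rV[R]_n) (L : R) (xstar : 'rV[R]_n)
  (theta : nat -> R) (x y : nat -> 'rV[R]_n) :
  convex_fun f ->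
  is_gradient f g ->
  0 < L ->
  (forall u v : 'rV[R]_n, enorm (g u - g v) <= L * enorm (u - v)) ->
  (forall u : 'rV[R]_n, f xstar <= f u) ->
  (forall k, 0 < theta k) ->
  theta 0%N = 1 ->
  (forall k, 0 <= theta k.+1 ^+ 2 - theta k.+1 /\
             theta k.+1 ^+ 2 - theta k.+1 <= theta k ^+ 2) ->
  y 0%N = x 0%N ->
  (forall k, y k.+1 = x k - L^-1 *: g (x k)) ->
  (forall k, x k.+1 = y k.+1 + ((theta k - 1) / theta k.+1) *: (y k.+1 - y k)
                             + (theta k / theta k.+1) *: (y k.+1 - x k)) ->
  forall k : nat, (1 <= k)%N ->
    f (y k) - f xstar <= L * enorm (x 0%N - xstar) ^+ 2 / (4 * theta k.-1 ^+ 2).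
Proof.
(* [y 0] never matters: it enters [x 1] with the coefficient [theta 0 - 1 = 0]. *)
move=> f_convex f_grad L_gt0 g_lip xs_min theta_gt0 theta0 theta_succ _ y_succ x_succ.
case=> [//|k] _.
exact: (ogm_rate f_convex f_grad L_gt0 g_lip xs_min theta_gt0 theta0 theta_succ y_succ x_succ).
Qed.
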